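(* For every integer $n\ge 0$, $$\int_0^1 Q_n(u;0,1)\,du=2^n B_n\!\left(\tfrac12\right),$$ where $Q_n(u;0,1)=\sum_{k=1}^{n+1}M_{n+1,k}\,u^{n+1-k}(u-1)^{k-1}$.
   Context: The MacMahon numbers $M_{n,k}$ ($n\ge1$, $1\le k\le n$) are defined by $M_{n,1}=1$ for all $n\ge1$ and, for $n\ge 2$, $2\le k\le n$, $M_{n,k}=(2k-1)M_{n-1,k}+(2n-2k+1)M_{n-1,k-1}$, with the convention $M_{n-1,n}=0$. For $a,b\in\mathbb{C}$ the derivative polynomial is $Q_n(u;a,b)=\sum_{k=1}^{n+1}M_{n+1,k}(u-a)^{n+1-k}(u-b)^{k-1}$. The Bernoulli polynomials $B_n(w)$ are defined by $\sum_{n\ge0}B_n(w)\frac{t^n}{n!}=\frac{t e^{wt}}{e^t-1}$. *)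

From HB Require Import structures.
From mathcomp Require Import all_boot all_order all_algebra.
Set Implicit Arguments. Unset Strict Implicit. Unset Printing Implicit Defensive.
Import Order.TTheory GRing.Theory Num.Theory.
Local Open Scope ring_scope.

(* MacMahon numbers M_{n,k} (n >= 1, 1 <= k <= n); value 0 outside that range,
   which implements the convention M_{n-1,n} = 0. *)
Fixpoint macmahon (n k : nat) : nat :=
  match n with
  | 0 => 0%N
  | n'.+1 =>
      if k == 1%N then 1%N
      else if (k == 0%N) || (n < k)%N then 0%N
      else ((2 * k - 1) * macmahon n' k + (2 * n - 2 * k + 1) * macmahon n' k.-1)%N
  end.

Definition Qpoly (n : nat) (a b : rat) : {poly rat} :=
  \sum_(1 <= k < n.+2)
     (macmahon n.+1 k)%:R *: (('X - a%:P) ^+ (n.+1 - k) * ('X - b%:P) ^+ (k - 1)).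

Definition poly_int01 (p : {poly rat}) : rat :=
  \sum_(i < size p) p`_i / (i.+1)%:R.

(* Bernoulli polynomial values B_n(w), from the generating function
   t e^{wt}/(e^t-1) = sum B_n(w) t^n/n!, i.e. (e^t - 1) * sum B_n(w) t^n/n! = t e^{wt};
   comparing coefficients of t^{n+1} gives
   sum_{k=0}^{n} C(n+1,k) B_k(w) = (n+1) w^n, which determines B_n(w) recursively. *)
Fixpoint bernoulli_upto (w : rat) (n : nat) : seq rat :=
  match n with
  | 0 => [:: 1]
  | n'.+1 =>
      let s := bernoulli_upto w n' in
      rcons s (w ^+ n - ((n.+1)%:R)^-1 * \sum_(k < n) ('C(n.+1, k))%:R * s`_k)
  end.

Definition bernoulli_poly_at (n : nat) (w : rat) : rat := (bernoulli_upto w n)`_n.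

From HB Require Import structures.
From mathcomp Require Import all_boot all_order all_algebra.
From mathcomp Require Import ring zify.
Import GRing.Theory Num.Theory.
Local Open Scope ring_scope.

(* Write Q_n for Q_n(u;0,1) and I_n for its integral over [0,1].  The proof
   works with exponential generating functions, encoded by the binomial
   convolution (a * b)_n = sum_k C(n,k) a_k b_(n-k) of coefficient sequences.
   1. The MacMahon recurrence says exactly that Q_(n+1) = dop Q_n, where
      dop p = (2u-1) p + 2u(u-1) p'.
   2. With e_j the coefficients of 2cosh t - 2(2u-1) sinh t, an induction
      using the Leibniz rule for the convolution and (1) gives the
      polynomial identity Q * e = 2 (i.e. sum_n Q_n t^n/n! = 1/(cosh t -
      (2u-1) sinh t)).
   3. Integrating (2) over [0,1], integrating by parts (u(u-1) vanishes at
      both ends) and using (1) gives I * s = 2t, where s has e.g.f.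
      e^t - e^(-t).  Convolving with e^t and using associativity turns this
      into sum_(k<=n) C(n+1,k) 2^(n-k) I_k = n+1.
   4. The sequence 2^n B_n(1/2) is the unique solution of this recurrence,
      by the defining recurrence of the Bernoulli polynomials. *)

Lemma poly_int01_widen (p : {poly rat}) (N : nat) : (size p <= N)%N ->
  poly_int01 p = \sum_(i < N) p`_i / i.+1%:R.
Proof.
move=> le_pN; rewrite /poly_int01 -!(big_mkord xpredT (fun i => p`_i / i.+1%:R)).
rewrite (big_cat_nat (leq0n _) le_pN) /= [X in _ = _ + X]big1_seq ?addr0 //.
by move=> i /andP[_]; rewrite mem_index_iota => /andP[le_pi _]; rewrite nth_default ?mul0r.
Qed.

Lemma poly_int01_linear (a : rat) (p q : {poly rat}) :
  poly_int01 (a *: p + q) = a * poly_int01 p + poly_int01 q.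
Proof.
set N := maxn (size p) (size q).
have le_apN : (size (a *: p) <= N)%N := leq_trans (size_scale_leq _ _) (leq_maxl _ _).
have le_sN : (size (a *: p + q)%R <= N)%N.
  by apply: leq_trans (size_polyD _ _) _; rewrite geq_max le_apN leq_maxr.
rewrite !(poly_int01_widen _ N) ?leq_maxl ?leq_maxr // mulr_sumr -big_split /=.
by apply: eq_bigr => i _; rewrite coefD coefZ mulrDl mulrA.
Qed.

Lemma poly_int01Z (a : rat) (p : {poly rat}) : poly_int01 (a *: p) = a * poly_int01 p.
Proof.
have := poly_int01_linear a p 0.
by rewrite addr0 => ->; rewrite /poly_int01 size_poly0 big_ord0 addr0.
Qed.

HB.instance Definition _ :=
  GRing.isLinear.Build rat {poly rat} rat *%R poly_int01 poly_int01_linear.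

Lemma poly_int01C (c : rat) : poly_int01 c%:P = c.
Proof.
by rewrite -alg_polyC poly_int01Z /poly_int01 size_poly1 big_ord1 coef1 divr1.
Qed.

Lemma poly_int01_deriv (p : {poly rat}) : poly_int01 p^`() = p.[1] - p.[0].
Proof.
have le_dp : (size p^`() <= size p)%N.
  have [->|p_neq0] := eqVneq p 0; first by rewrite deriv0.
  exact: ltnW (lt_size_deriv p_neq0).
rewrite (poly_int01_widen _ _ le_dp) horner_coef0 horner_coef.
have -> : \sum_(i < size p) p`_i * 1 ^+ i = \sum_(i < (size p).+1) p`_i.
  rewrite big_ord_recr /= nth_default // addr0.
  by apply: eq_bigr => i _; rewrite expr1n mulr1.
rewrite big_ord_recl /= addrC addKr; apply: eq_bigr => i _.
rewrite coef_deriv /bump /= add1n -mulr_natr; field.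
by rewrite addrC natr1 pnatr_eq0.
Qed.

(* Choosing k + i elements and then k of them amounts to choosing k and then i more;
   this is what makes the binomial convolution associative. *)
Lemma bin_mul_bin (m k i : nat) :
  ('C(m, k + i) * 'C(k + i, k) = 'C(m, k) * 'C(m - k, i))%N.
Proof.
have [le_kim | lt_mki] := leqP (k + i) m; last first.
  rewrite bin_small // mul0n; have [le_km | lt_mk] := leqP k m.
    by rewrite (@bin_small (m - k)) ?muln0 //; lia.
  by rewrite bin_small.
have le_km : (k <= m)%N by lia.
have le_imk : (i <= m - k)%N by lia.
have fact_pos : (0 < k`! * i`! * (m - (k + i))`!)%N by rewrite !muln_gt0 !fact_gt0.
apply/eqP; rewrite -(eqn_pmul2r fact_pos); apply/eqP.
have bin_ki := bin_fact (leq_addr i k); rewrite addKn in bin_ki.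
have bin_mki := bin_fact le_imk; rewrite -subnDA in bin_mki.
transitivity ('C(m, k + i) * ('C(k + i, k) * (k`! * i`!)) * (m - (k + i))`!)%N.
  by rewrite !mulnA.
rewrite bin_ki -mulnA bin_fact // -(bin_fact le_km) -bin_mki.
ring.
Qed.

Section BinomialConvolution.
Context {R : pzRingType}.
Implicit Types a b c : nat -> R.

(* (bconv a b)_n = sum_k C(n,k) a_k b_(n-k): the coefficients of the product of the
   exponential generating functions of a and b. *)
Definition bconv a b (n : nat) : R := \sum_(k < n.+1) a k * b (n - k)%N *+ 'C(n, k).

(* The shifted sequence: the derivative of the exponential generating function. *)
Definition tail_seq a (n : nat) : R := a n.+1.

Lemma bconv_widen a b (n N : nat) : (n < N)%N ->
  bconv a b n = \sum_(k < N) a k * b (n - k)%N *+ 'C(n, k).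
Proof.
move=> lt_nN; rewrite /bconv (big_ord_widen N (fun k => a k * b (n - k)%N *+ 'C(n, k)) lt_nN).
rewrite big_mkcond; apply: eq_bigr => k _; case: ifP => // /negbT.
by rewrite -leqNgt => lt_nk; rewrite bin_small.
Qed.

Lemma bconvS a b (n : nat) :
  bconv a b n.+1 = bconv (tail_seq a) b n + bconv a (tail_seq b) n.
Proof.
rewrite /bconv /tail_seq big_ord_recl /= bin0 mulr1n subn0.
under eq_bigr => k _ do rewrite /bump /= add1n binS mulrnDr subSS.
rewrite big_split /= addrA addrC; congr (_ + _).
rewrite [RHS]big_ord_recl /= bin0 mulr1n subn0; congr (_ + _).
rewrite big_ord_recr /= bin_small // mulr0n addr0.
by apply: eq_bigr => k _; rewrite /bump /= add1n subnSK.
Qed.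

Lemma bconvA a b c (m : nat) : bconv (bconv a b) c m = bconv a (bconv b c) m.
Proof.
transitivity (\sum_(j < m.+1) \sum_(k < m.+1)
    a k * b (j - k)%N * c (m - j)%N *+ ('C(j, k) * 'C(m, j))).
  apply: eq_bigr => j _; rewrite (@bconv_widen _ _ j m.+1) // mulr_suml -sumrMnl.
  by apply: eq_bigr => k _; rewrite mulrnAl mulrnA.
rewrite exchange_big; apply: eq_bigr => k _ /=.
have le_km : (k <= m)%N by rewrite -ltnS.
rewrite mulr_sumr -sumrMnl -(big_mkord xpredT (fun j =>
  a k * b (j - k)%N * c (m - j)%N *+ ('C(j, k) * 'C(m, j)))).
rewrite (@big_cat_nat _ _ _ k) ?(leqW le_km) // big1_seq ?Monoid.mul1m; last first.
  by move=> j /andP[_]; rewrite mem_index_iota => /andP[_ lt_jk]; rewrite bin_small.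
rewrite -{1}(add0n k) big_addn subSn // big_mkord; apply: eq_bigr => i _.
rewrite addnK [(i + k)%N]addnC -subnDA [('C(k + i, k) * _)%N]mulnC bin_mul_bin.
by rewrite mulrnAr -mulrnA mulrA mulnC.
Qed.

End BinomialConvolution.

Lemma macmahon_n0 (n : nat) : macmahon n 0 = 0%N.
Proof. by case: n. Qed.

Lemma macmahon_small (n k : nat) : (n < k)%N -> macmahon n k = 0%N.
Proof.
case: n => [//|n] lt_nk /=.
have -> : (k == 1%N) = false by apply/eqP; lia.
by rewrite lt_nk orbT.
Qed.

Lemma macmahon_SS (n k : nat) : (1 < k <= n.+1)%N ->
  macmahon n.+1 k = ((2 * k - 1) * macmahon n k + (2 * n.+1 - 2 * k + 1) * macmahon n k.-1)%N.
Proof.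
move=> /andP[lt_1k le_kn]; rewrite [LHS]/=.
have -> : (k == 1%N) = false by apply/eqP; lia.
by have -> : (k == 0%N) || (n.+1 < k)%N = false by apply/negbTE; rewrite negb_or; lia.
Qed.

(* The MacMahon recurrence in the shifted indexing j = k - 1 used for Q_n. *)
Lemma macmahon_rec (n j : nat) : (j <= n.+1)%N ->
  macmahon n.+2 j.+1 =
    (macmahon n.+1 j.+1 * (2 * j + 1) + macmahon n.+1 j * (2 * (n.+1 - j) + 1))%N.
Proof.
case: j => [|j] le_jn; first by rewrite macmahon_n0.
rewrite macmahon_SS; last by lia.
have -> : (2 * j.+2 - 1 = 2 * j.+1 + 1)%N by lia.
have -> : (2 * n.+2 - 2 * j.+2 + 1 = 2 * (n.+1 - j.+1) + 1)%N by lia.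
by rewrite [j.+2.-1]/= (mulnC _ (macmahon n.+1 j.+2)) (mulnC _ (macmahon n.+1 j.+1)).
Qed.

Arguments macmahon : simpl never.

Definition mono (a b : nat) : {poly rat} := 'X ^+ a * ('X - 1) ^+ b.

Definition dop (p : {poly rat}) : {poly rat} :=
  ('X *+ 2 - 1) * p + ('X * ('X - 1)) * p^`() *+ 2.

Lemma dop_is_zmod_morphism : zmod_morphism dop.
Proof. by move=> p q; rewrite /dop derivB; ring. Qed.

HB.instance Definition _ := GRing.isZmodMorphism.Build _ _ dop dop_is_zmod_morphism.

Lemma dop_mono (a b : nat) :
  dop (mono a b) = mono a b.+1 *+ (2 * a + 1) + mono a.+1 b *+ (2 * b + 1).
Proof.
rewrite /dop /mono derivM !deriv_exp !derivXsubC derivX !mul1r.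
by case: a => [|a]; case: b => [|b] /=; rewrite ?mulr0n ?expr0 ?exprS; ring.
Qed.

Lemma Qpoly_mono (n : nat) :
  Qpoly n 0 1 = \sum_(j < n.+1) mono (n - j) j *+ macmahon n.+1 j.+1.
Proof.
rewrite /Qpoly big_add1 /= big_mkord; apply: eq_bigr => j _.
by rewrite scaler_nat subSS subn1 polyC0 subr0 polyC1.
Qed.

(* Both sides expand to the same combination of monomials, coefficient by coefficient
   by the MacMahon recurrence. *)
Lemma Qpoly_succ (n : nat) : Qpoly n.+1 0 1 = dop (Qpoly n 0 1).
Proof.
pose F j := mono (n - j) j.+1 *+ (macmahon n.+1 j.+1 * (2 * (n - j) + 1))
          + mono (n.+1 - j) j *+ (macmahon n.+1 j.+1 * (2 * j + 1)).
transitivity (\sum_(j < n.+1) F j).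
  rewrite Qpoly_mono.
  under eq_bigr => j _ do rewrite (macmahon_rec n j (ltn_ord j)) mulrnDr.
  rewrite big_split /= addrC [X in X + _]big_ord_recl [X in _ + X]big_ord_recr /=.
  rewrite macmahon_n0 macmahon_small // !mul0n !mulr0n add0r addr0 -big_split /=.
  apply: eq_bigr => j _.
  by rewrite /F /bump /= add1n subSS (subSn (leq_ord j)).
rewrite Qpoly_mono raddf_sum; apply: eq_bigr => j _.
rewrite raddfMn /= dop_mono mulrnDl -!mulrnA /F (subSn (leq_ord j)) mulnC.
by rewrite [(macmahon _ _ * (2 * j + 1))%N]mulnC.
Qed.

(* Coefficients of e^t - e^(-t). *)
Definition sgn_seq (j : nat) : rat := 1 - (-1) ^+ j.

Definition c2 : {poly rat} := 'X *+ 2 - 1.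

(* Coefficients of 2 cosh t - 2 (2u-1) sinh t. *)
Definition eseq (j : nat) : {poly rat} := (sgn_seq j.+1)%:P - (sgn_seq j)%:P * c2.

Definition Qseq (k : nat) : {poly rat} := Qpoly k 0 1.

(* One step of the induction: dop Q * e_j + Q * e_(j+1) is an exact multiple of
   u(u-1) times a derivative, since e_j' = -2 s_j and c2 e_j + e_(j+1) = -4u(u-1) s_j. *)
Lemma eseq_step (Q : {poly rat}) (j : nat) :
  dop Q * eseq j + Q * eseq j.+1 = ('X * ('X - 1)) * (Q * eseq j)^`() *+ 2.
Proof.
have sgn_seqSS : sgn_seq j.+2 = sgn_seq j by rewrite /sgn_seq !exprS mulrA mulrNN mul1r.
have deriv_eseq : (eseq j)^`() = - (sgn_seq j)%:P *+ 2.
  by rewrite /eseq /c2 !derivE; ring.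
rewrite /eseq sgn_seqSS -/(eseq j) derivM deriv_eseq /dop /eseq /c2; ring.
Qed.

(* The generating-function identity Q * e = 2: by induction, since each step is
   u(u-1) times the derivative of the previous (constant) convolution. *)
Lemma Q_eseq_conv (n : nat) : bconv Qseq eseq n = (n == 0)%:R *+ 2.
Proof.
elim: n => [|n IH].
  rewrite /bconv big_ord1 /Qseq Qpoly_mono big_ord1 /eseq /sgn_seq /mono /=.
  rewrite subnn !expr0 mulr1 subrr mul0r subr0 expr1 opprK mul1r mulr1n.
  by rewrite polyCD polyC1 mulr2n.
rewrite bconvS /bconv -big_split /=.
transitivity (('X * ('X - 1)) * (bconv Qseq eseq n)^`() *+ 2); last first.
  by rewrite IH derivMn -polyC_natr derivC mul0rn mulr0 mul0rn.
rewrite raddf_sum mulr_sumr -sumrMnl; apply: eq_bigr => k _.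
rewrite /tail_seq /Qseq Qpoly_succ -mulrnDl eseq_step.
by rewrite raddfMn mulrnAr -!mulrnA mulnC.
Qed.

Definition qint (k : nat) : rat := poly_int01 (Qseq k).

(* Integration by parts: u(u-1) vanishes at 0 and 1. *)
Lemma qint_succ (k : nat) : qint k.+1 = - poly_int01 (Qseq k * c2).
Proof.
rewrite /qint; have -> : Qseq k.+1 = ('X * ('X - 1) * Qseq k)^`() *+ 2 - Qseq k * c2.
  by rewrite /Qseq Qpoly_succ /dop /c2 !derivM derivX derivXsubC; ring.
by rewrite raddfB raddfMn /= poly_int01_deriv !hornerE /=.
Qed.

Lemma int_Q_eseq (k j : nat) :
  poly_int01 (Qseq k * eseq j) = qint k * sgn_seq j.+1 + qint k.+1 * sgn_seq j.
Proof.
have -> : Qseq k * eseq j = sgn_seq j.+1 *: Qseq k - sgn_seq j *: (Qseq k * c2).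
  by rewrite /eseq -!mul_polyC; ring.
by rewrite raddfB /= !poly_int01Z qint_succ /qint; ring.
Qed.

(* Integrated: I * (e^t - e^(-t)) = 2t. *)
Lemma qint_sgn_conv (m : nat) : bconv qint sgn_seq m = (m == 1%N)%:R *+ 2.
Proof.
case: m => [|n]; first by rewrite /bconv big_ord1 /sgn_seq subrr mulr0 mul0rn.
rewrite bconvS addrC; have := congr1 poly_int01 (Q_eseq_conv n).
rewrite raddfMn /= -polyC_natr poly_int01C => <-.
rewrite /bconv -big_split raddf_sum; apply: eq_bigr => k _ /=.
by rewrite raddfMn /= int_Q_eseq mulrnDl /tail_seq.
Qed.

(* (e^t - e^(-t)) e^t = e^(2t) - 1, by the binomial theorem. *)
Lemma bconv_sgn_ones (N : nat) : bconv sgn_seq (fun=> 1) N = 2 ^+ N - (N == 0)%:R.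
Proof.
have := exprDn (1 : rat) 1 N; have := exprDn (1 : rat) (-1) N.
rewrite subrr expr0n /= => sum_m1 sum_2.
rewrite -[2 : rat]/(1 + 1) sum_2 sum_m1 -sumrB; apply: eq_bigr => i _.
by rewrite /sgn_seq !expr1n mulr1 mulrnBl; ring.
Qed.

(* Convolving I * (e^t - e^(-t)) = 2t with e^t: I * (e^(2t) - 1) = 2t e^t. *)
Lemma qint_binomial_sum (n : nat) :
  \sum_(k < n.+1) qint k * 2 ^+ (n - k) *+ 'C(n.+1, k) = n.+1%:R.
Proof.
have conv_lhs : bconv (bconv qint sgn_seq) (fun=> 1) n.+1 = n.+1%:R *+ 2.
  rewrite [LHS]/bconv !big_ord_recl big1 => [|i _]; last first.
    by rewrite qint_sgn_conv /= !(mulr0n, mul0rn, mul0r).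
  rewrite !qint_sgn_conv /= !(mul0rn, mul0r, mulr1, add0r, addr0) bin1.
  by rewrite -mulrnA mulnC mulrnA.
have conv_rhs : bconv qint (bconv sgn_seq (fun=> 1)) n.+1 =
                (\sum_(k < n.+1) qint k * 2 ^+ (n - k) *+ 'C(n.+1, k)) *+ 2.
  rewrite [LHS]/bconv big_ord_recr /= subnn bconv_sgn_ones expr0 subrr mulr0 mul0rn addr0.
  rewrite -sumrMnl; apply: eq_bigr => k _.
  by rewrite bconv_sgn_ones (subSn (leq_ord k)) /= subr0 exprS -mulrnA mulnC mulrnA; ring.
have /eqP := bconvA qint sgn_seq (fun=> 1) n.+1.
by rewrite conv_lhs conv_rhs eqr_pMn2r // => /eqP.
Qed.

Lemma size_bernoulli_upto (w : rat) (m : nat) : size (bernoulli_upto w m) = m.+1.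
Proof. by elim: m => [//|m IH] /=; rewrite size_rcons IH. Qed.

Lemma bernoulli_upto_nth (w : rat) (m k : nat) :
  (k <= m)%N -> (bernoulli_upto w m)`_k = bernoulli_poly_at k w.
Proof.
elim: m => [|m IH] le_km; first by case: k le_km.
have [->//|neq_km] := eqVneq k m.+1.
have le_km' : (k <= m)%N by rewrite -ltnS ltn_neqAle neq_km le_km.
by rewrite /= nth_rcons size_bernoulli_upto ltnS le_km' IH.
Qed.

Lemma bernoulli_rec (w : rat) (n : nat) :
  bernoulli_poly_at n w =
    w ^+ n - n.+1%:R^-1 * \sum_(k < n) ('C(n.+1, k))%:R * bernoulli_poly_at k w.
Proof.
case: n => [|n]; first by rewrite /bernoulli_poly_at big_ord0 mulr0 subr0.
rewrite {1}/bernoulli_poly_at /= nth_rcons size_bernoulli_upto ltnn eqxx.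
congr (_ - _ * _); apply: eq_bigr => k _.
by rewrite (bernoulli_upto_nth _ _ _ (leq_ord k)).
Qed.

Lemma bernoulli_sum (w : rat) (n : nat) :
  \sum_(k < n.+1) ('C(n.+1, k))%:R * bernoulli_poly_at k w = n.+1%:R * w ^+ n.
Proof.
rewrite big_ord_recr /= binSn [bernoulli_poly_at n w]bernoulli_rec mulrBr mulrA.
by rewrite mulfV ?pnatr_eq0 // mul1r addrC subrK.
Qed.

Lemma bernoulli_unique (w : rat) (x : nat -> rat) :
  (forall n, \sum_(k < n.+1) ('C(n.+1, k))%:R * x k = n.+1%:R * w ^+ n) ->
  forall n, x n = bernoulli_poly_at n w.
Proof.
move=> x_rec; elim/ltn_ind => n IH.
have := x_rec n; rewrite -(bernoulli_sum w n) !big_ord_recr /= binSn.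
under eq_bigr => k _ do rewrite IH //.
by move/addrI/mulfI; apply; rewrite pnatr_eq0.
Qed.

Lemma qint_scaled_rec (m : nat) :
  \sum_(k < m.+1) ('C(m.+1, k))%:R * (qint k / 2 ^+ k) = m.+1%:R * (2^-1) ^+ m.
Proof.
have two_pow_neq0 i : (2 ^+ i : rat) != 0 by rewrite expf_neq0.
rewrite exprVn -(qint_binomial_sum m) mulr_suml; apply: eq_bigr => k _.
have -> : (2 ^+ m : rat) = 2 ^+ (m - k) * 2 ^+ k by rewrite -exprD subnK ?leq_ord.
by rewrite mulr_natl; field; rewrite !two_pow_neq0.
Qed.

Theorem theorem4 (n : nat) :
  poly_int01 (Qpoly n 0 1) = 2%:R ^+ n * bernoulli_poly_at n (2%:R)^-1.
Proof.
rewrite -(bernoulli_unique _ (fun k => qint k / 2 ^+ k) qint_scaled_rec n) /=.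
by rewrite -/(Qseq n) -/(qint n) mulrC divfK // expf_neq0.
Qed.
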